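(* Let $z^0\in X$ and let $\{\sigma_k\},\{\eta_k\},\{\delta_k\}$ be nonnegative sequences with $\sum_k\eta_k<\infty$, $\inf_k\sigma_k>0$, $\sup_k\delta_k<1$, and let $z^{k+1}$ be an output of IGPPAstep$(z^k,\sigma_k,\eta_k,\delta_k,\gamma,M)$ for all $k\ge0$, where $\gamma\in(0,2)$. Assume $T$ satisfies the bounded metric subregularity condition, let $\bar z^0$ be a point of $\Omega$ nearest to $z^0$ in $\|\cdot\|_M$, let $r>0$ satisfy $r\ge\|\bar z^0\|+\frac{1}{\lambda_{\min}(M)}\big(\operatorname{dist}_M(z^0,\Omega)+\gamma\sum_{k\ge0}\eta_k\big)$, and let $\kappa_r>0$ be such that $\operatorname{dist}(z,\Omega)\le\kappa_r\operatorname{dist}(0,T(z))$ whenever $\|z\|\le r$. Then for every $k\ge0$, $$\operatorname{dist}_M(z^{k+1},\Omega)\le\rho_k\operatorname{dist}_M(z^k,\Omega),\quad \rho_k:=\frac{1}{1-\delta_k}\Big(\sqrt{1-\frac{\min\{\gamma,2\gamma-\gamma^2\}\sigma_k^2}{\sigma_k^2+\kappa_r^2}}+\delta_k\Big(\frac{\min\{\gamma,1\}\kappa_r}{\sqrt{\sigma_k^2+\kappa_r^2}}+1\Big)\Big).$$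
   Context: $X$ is a finite-dimensional real Hilbert space with inner product $\langle\cdot,\cdot\rangle$ and norm $\|\cdot\|$; $T:X\rightrightarrows X$ is maximal monotone and $\Omega:=T^{-1}(0)$ is nonempty. $M$ is a self-adjoint positive definite linear operator on $X$ with $\lambda_{\max}(M)=1$; $\|z\|_M=\sqrt{\langle z,Mz\rangle}$, $\operatorname{dist}_M(z,D)=\min_{d\in D}\|d-z\|_M$, $\operatorname{dist}=\operatorname{dist}_I$. For $\sigma>0$, $\mathcal{J}_{\sigma M^{-1}T}:=(I+\sigma M^{-1}T)^{-1}$. A point $z^+$ is an output of IGPPAstep$(z,\sigma,\eta,\delta,\gamma,M)$ if $z^+=\gamma w+(1-\gamma)z$ for some $w$ with $\|w-\mathcal{J}_{\sigma M^{-1}T}(z)\|_M\le\min\{\eta,\delta\|w-z\|_M\}$. Bounded metric subregularity of $T$: for every $r>0$ there is $\kappa_r>0$ with $\operatorname{dist}(z,\Omega)\le\kappa_r\operatorname{dist}(0,T(z))$ for all $\|z\|\le r$. *)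

From HB Require Import structures.
From mathcomp Require Import all_boot all_order all_algebra.
From mathcomp Require Import all_classical all_reals.
From mathcomp Require Import ereal sequences.
Set Implicit Arguments. Unset Strict Implicit. Unset Printing Implicit Defensive.
Import Order.TTheory GRing.Theory Num.Theory.
Local Open Scope ring_scope.
Local Open Scope classical_set_scope.

(* X is modelled as R^n (row vectors) with the standard inner product. *)
Section Defs.
Variables (R : realType) (n : nat).
Implicit Types (u v z : 'rV[R]_n) (M : 'M[R]_n).

Definition ip u v : R := (u *m v^T) 0 0.
Definition normv z : R := Num.sqrt (ip z z).
Definition normM M z : R := Num.sqrt (ip z (z *m M)).

(* dist_N(x, A) = inf_{a in A} N(a - x), valued in \bar R (+oo if A empty) *)
Definition distE (N : 'rV[R]_n -> R) (x : 'rV[R]_n) (A : set 'rV[R]_n) : \bar R :=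
  ereal_inf [set (N (a - x))%:E | a in A].

Definition monotone_op (T : 'rV[R]_n -> set 'rV[R]_n) : Prop :=
  forall x y u v, T x u -> T y v -> 0 <= ip (x - y) (u - v).

Definition maximal_monotone (T : 'rV[R]_n -> set 'rV[R]_n) : Prop :=
  monotone_op T /\
  forall x u, (forall y v, T y v -> 0 <= ip (x - y) (u - v)) -> T x u.

Definition zeros (T : 'rV[R]_n -> set 'rV[R]_n) : set 'rV[R]_n :=
  [set z | T z 0].

Definition self_adjoint M : Prop := M^T = M.
Definition pos_def M : Prop := forall z, z != 0 -> 0 < ip z (z *m M).

(* p = J_{sigma M^{-1} T}(z), i.e. z \in p + sigma M^{-1} T(p) *)
Definition resolvent_pt M (T : 'rV[R]_n -> set 'rV[R]_n) (sigma : R) z p : Prop :=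
  exists v, T p v /\ z = p + sigma *: (v *m invmx M).

Definition IGPPAstep_out M (T : 'rV[R]_n -> set 'rV[R]_n)
  (z : 'rV[R]_n) (sigma eta delta gamma : R) (z' : 'rV[R]_n) : Prop :=
  exists w p, resolvent_pt M T sigma z p /\
    normM M (w - p) <= Num.min eta (delta * normM M (w - z)) /\
    z' = gamma *: w + (1 - gamma) *: z.

Definition rate (gamma kappa sigma delta : R) : R :=
  (1 - delta)^-1 *
  (Num.sqrt (1 - Num.min gamma (2 * gamma - gamma ^+ 2) * sigma ^+ 2
                 / (sigma ^+ 2 + kappa ^+ 2))
   + delta * (Num.min gamma 1 * kappa / Num.sqrt (sigma ^+ 2 + kappa ^+ 2) + 1)).
End Defs.

(* Let p be the exact resolvent point of the current iterate x, v in T p the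
   corresponding element with (x - p) M = s v, zh = g p + (1 - g) x the exact
   relaxed step and B = ||x - p||_M^2.  Monotonicity of T gives
   <p - o, x - p>_M >= 0 for every zero o, hence ||p - o||_M^2 + B <= ||x - o||_M^2:
   the iterates are Fejer monotone up to the summable errors g eta_k, and since
   lmin ||.|| <= ||.||_M every resolvent point stays in the ball of radius r.
   There subregularity gives dist(p) <= kappa ||v||, and s ||v|| = ||(x - p) M||
   <= ||x - p||_M because 0 < M <= I, so dist_M(p)^2 s^2 <= kappa^2 B.  If g <= 1,
   convexity of the zero set gives dist_M(zh)^2 <= g dist_M(p)^2 + (1 - g) dist_M(x)^2;
   if g > 1, dist_M(zh)^2 is bounded both by dist_M(x)^2 - (2g - g^2) B and by
   dist_M(p)^2 + (1 - g)^2 B.  Eliminating B yields the square-root factor of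
   the rate, and the inexactness ||w - p||_M <= delta ||w - x||_M costs at most
   g delta / (1 - delta) dist_M(x), which the delta-term of the rate dominates. *)
From HB Require Import structures.
From mathcomp Require Import all_boot all_order all_algebra.
From mathcomp Require Import all_classical all_reals.
From mathcomp Require Import ereal sequences.
From mathcomp Require Import complex ring lra.
Set Implicit Arguments. Unset Strict Implicit. Unset Printing Implicit Defensive.
Import Order.TTheory GRing.Theory Num.Theory.
Local Open Scope ring_scope.
Local Open Scope classical_set_scope.

Section InnerProduct.
Variables (R : realType) (n : nat).
Implicit Types (u v w : 'rV[R]_n) (A : 'M[R]_n).

Lemma ipE u v : ip u v = \sum_j u 0 j * v 0 j.
Proof. by rewrite /ip mxE; apply: eq_bigr => j _; rewrite mxE. Qed.

Lemma ipC u v : ip u v = ip v u.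
Proof. by rewrite !ipE; apply: eq_bigr => j _; rewrite mulrC. Qed.

Lemma ipDl u v w : ip (u + v) w = ip u w + ip v w.
Proof. by rewrite /ip mulmxDl mxE. Qed.

Lemma ipZl (c : R) u w : ip (c *: u) w = c * ip u w.
Proof. by rewrite /ip -scalemxAl mxE. Qed.

Lemma ipDr u v w : ip w (u + v) = ip w u + ip w v.
Proof. by rewrite ipC ipDl ![ip _ w]ipC. Qed.

Lemma ipZr (c : R) u w : ip w (c *: u) = c * ip w u.
Proof. by rewrite ipC ipZl ipC. Qed.

Lemma ip0r u : ip u 0 = 0.
Proof. by rewrite /ip trmx0 mulmx0 mxE. Qed.

Lemma ip_mulmxr u v A : ip u (v *m A) = ip (u *m A^T) v.
Proof. by rewrite /ip trmx_mul mulmxA. Qed.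

Lemma ip_ge0 u : 0 <= ip u u.
Proof. by rewrite ipE sumr_ge0 // => j _; rewrite -expr2 sqr_ge0. Qed.

Lemma ip_gt0 u : u != 0 -> 0 < ip u u.
Proof.
case/eqP/rowP/boolp.existsNP => j /eqP uj_neq0.
rewrite ipE (bigD1 j) //= ltr_pwDl ?sumr_ge0 // => [|i _].
  by rewrite mxE in uj_neq0; rewrite -expr2 exprn_even_gt0.
by rewrite -expr2 sqr_ge0.
Qed.

End InnerProduct.

Definition ipM (R : realType) n (M : 'M[R]_n) (u v : 'rV[R]_n) : R := ip u (v *m M).

Section MInnerProduct.
Variables (R : realType) (n : nat) (M : 'M[R]_n).
Hypotheses (M_sym : M^T = M) (M_pd : pos_def M).
Implicit Types (u v : 'rV[R]_n).
Local Notation ipM := (ipM M).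
Local Notation normM := (normM M).

Lemma ipMC u v : ipM u v = ipM v u.
Proof. by rewrite /ipM ip_mulmxr M_sym ipC. Qed.

Lemma ipM_sqrDZ u v (c : R) :
  ipM (u + c *: v) (u + c *: v) = ipM u u + 2 * c * ipM u v + c ^+ 2 * ipM v v.
Proof.
rewrite /ipM mulmxDl -scalemxAl !ipDl !ipDr !ipZl !ipZr.
rewrite -/(ipM v u) -/(ipM u v) [ipM v u]ipMC; ring.
Qed.

Lemma ipM_ge0 u : 0 <= ipM u u.
Proof. by have [->|/M_pd/ltW//] := eqVneq u 0; rewrite /ipM mul0mx ip0r. Qed.

Lemma ipM_convex u v (g : R) : 0 <= g <= 1 ->
  ipM (g *: u + (1 - g) *: v) (g *: u + (1 - g) *: v) <= g * ipM u u + (1 - g) * ipM v v.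
Proof.
move=> /andP[g_ge0 g_le1].
have -> : g *: u + (1 - g) *: v = v + g *: (u - v).
  by apply/rowP => j; rewrite !mxE; ring.
have -> : ipM u u = ipM (v + 1 *: (u - v)) (v + 1 *: (u - v)).
  by rewrite scale1r addrC subrK.
rewrite !ipM_sqrDZ.
have := ipM_ge0 (u - v); have : 0 <= g * (1 - g) by rewrite mulr_ge0 ?subr_ge0.
nra.
Qed.

Lemma normM_ge0 u : 0 <= normM u.
Proof. exact: sqrtr_ge0. Qed.

Lemma normM_sqr u : normM u ^+ 2 = ipM u u.
Proof. by rewrite sqr_sqrtr // ipM_ge0. Qed.

Lemma normM_le_sqr u (x : R) : 0 <= x -> ipM u u <= x ^+ 2 -> normM u <= x.
Proof. by move=> x_ge0 u_x; rewrite -[x]ger0_norm // -sqrtr_sqr ler_wsqrtr. Qed.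

Lemma ipM_sqr_le u v : ipM u v ^+ 2 <= ipM u u * ipM v v.
Proof.
have [->|/M_pd v_gt0] := eqVneq v 0.
  by rewrite /ipM !mul0mx !ip0r expr0n mulr0.
have [c c_vv] : exists c, c * ipM v v = ipM u v.
  by exists (ipM u v / ipM v v); rewrite divfK ?gt_eqF.
have := ipM_ge0 (u + (- c) *: v).
rewrite ipM_sqrDZ sqrrN expr2 -[c * c * _]mulrA c_vv => u_cv_ge0.
have : 0 <= (ipM u u - c * ipM u v) * ipM v v by apply: mulr_ge0; [nra | exact: ipM_ge0].
by rewrite mulrBl -mulrA [ipM u v * _]mulrC mulrA c_vv -expr2 subr_ge0.
Qed.

Lemma ipM_le u v : ipM u v <= normM u * normM v.
Proof.
rewrite -sqrtrM ?ipM_ge0 // (le_trans (ler_norm _)) // -sqrtr_sqr.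
by rewrite ler_wsqrtr ?ipM_sqr_le.
Qed.

Lemma normMD u v : normM (u + v) <= normM u + normM v.
Proof.
apply: normM_le_sqr; first by rewrite addr_ge0 ?normM_ge0.
have := ipM_sqrDZ u v 1; rewrite scale1r mulr1 expr1n mul1r => ->.
by rewrite sqrrD !normM_sqr; have := ipM_le u v; lra.
Qed.

Lemma normMZ (c : R) u : normM (c *: u) = `|c| * normM u.
Proof.
rewrite /normM -/(ipM _ _) /ipM -scalemxAl ipZl ipZr mulrA -expr2.
by rewrite sqrtrM ?sqr_ge0 // sqrtr_sqr.
Qed.

Lemma normMB u v : normM (u - v) = normM (v - u).
Proof. by rewrite -opprB -scaleN1r normMZ normrN1 mul1r. Qed.

End MInnerProduct.

Lemma pos_def1 (R : realType) n : pos_def (1%:M : 'M[R]_n).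
Proof. by move=> z /ip_gt0; rewrite mulmx1. Qed.

Lemma normvE (R : realType) n (z : 'rV[R]_n) : normv z = normM 1%:M z.
Proof. by rewrite /normv /normM mulmx1. Qed.

Lemma normvD (R : realType) n (u v : 'rV[R]_n) : normv (u + v) <= normv u + normv v.
Proof. by rewrite !normvE; apply: normMD; [exact: trmx1 | exact: pos_def1]. Qed.

Lemma normv_le_normM (R : realType) n (M : 'M[R]_n) (l : R) (u : 'rV[R]_n) :
  0 <= l <= 1 -> l * ip u u <= ipM M u u -> l * normv u <= normM M u.
Proof.
move=> /andP[l_ge0 l_le1]; rewrite /ipM => l_ip.
rewrite -[l]ger0_norm // -sqrtr_sqr -sqrtrM ?sqr_ge0 // ler_wsqrtr //.
have : 0 <= l * (1 - l) * ip u u by rewrite !mulr_ge0 ?subr_ge0 ?ip_ge0.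
nra.
Qed.

Lemma pos_def_unitmx (R : realType) n (M : 'M[R]_n) : pos_def M -> M \in unitmx.
Proof.
move=> M_pd; rewrite -row_free_unit -kermx_eq0; apply/negP => /negP ker_neq0.
have := M_pd (nz_row (kermx M)); rewrite nz_row_eq0 => /(_ ker_neq0).
have /submxP[D ->] := nz_row_sub (kermx M).
by rewrite -mulmxA mulmx_ker mulmx0 ip0r ltxx.
Qed.

Section NormalSpectral.
Variables (C : numClosedFieldType) (n : nat) (A : 'M[C]_n).
Hypothesis A_normal : A \is normalmx.
Local Notation P := (spectralmx A).
Local Notation D := (spectral_diag A).
Local Open Scope sesquilinear_scope.

Lemma spectralmx_mulmxtC : P *m P^t* = 1%:M.
Proof. exact/unitarymxP/spectral_unitarymx. Qed.

Lemma spectralmx_trC_mulmx : P^t* *m P = 1%:M.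
Proof. by rewrite -invmx_unitary ?spectral_unitarymx // mulVmx ?spectral_unit. Qed.

Lemma normal_spectral_decomposition : A = P^t* *m diag_mx D *m P.
Proof. by rewrite -invmx_unitary ?spectral_unitarymx //; apply/orthomx_spectralP. Qed.

Lemma normal_spectral_exp k : A ^+ k = P^t* *m diag_mx (map_mx (fun d => d ^+ k) D) *m P.
Proof.
elim: k => [|k IHk].
  have -> : map_mx (fun d => d ^+ 0) D = const_mx 1 by apply/rowP => j; rewrite !mxE.
  by rewrite expr0 diag_const_mx mulmx1 spectralmx_trC_mulmx.
rewrite exprS IHk {1}normal_spectral_decomposition -mulmxE !mulmxA.
rewrite -[_ *m P *m P^t*]mulmxA spectralmx_mulmxtC mulmx1.
rewrite -[_ *m diag_mx D *m _]mulmxA mulmx_diag; congr (_ *m diag_mx _ *m _).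
by apply/rowP => j; rewrite !mxE exprS.
Qed.

Lemma spectral_diag_eigenvalue j : eigenvalue A (D 0 j).
Proof.
apply/eigenvalueP; exists (delta_mx 0 j *m P).
  rewrite [X in _ *m X = _]normal_spectral_decomposition !mulmxA -[_ *m P *m P^t*]mulmxA.
  rewrite spectralmx_mulmxtC mulmx1 scalemxAl; congr (_ *m P).
  apply/rowP => i; rewrite mul_mx_diag !mxE.
  by have [->|] := eqVneq i j; rewrite ?mulr1 ?mulr0 ?mul1r ?mul0r ?andbF.
apply/negP => /eqP/(congr1 (fun B => B *m P^t*)).
rewrite -mulmxA spectralmx_mulmxtC mulmx1 mul0mx => /rowP/(_ j)/eqP.
by rewrite !mxE !eqxx oner_eq0.
Qed.

End NormalSpectral.

Section SymmetricSpectral.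
Variables (R : realType) (n : nat).
Local Notation toC := (real_complex R).
Local Open Scope sesquilinear_scope.

Lemma conjC_real_complex (x : R) : (toC x)^* = toC x.
Proof.
apply: conj_Creal; rewrite realE; have [x_ge0|x_lt0] := lerP 0 x.
  by rewrite ler0c x_ge0.
by rewrite orbC -[0 : R[i]]/(toC 0) lecR ltW.
Qed.

Lemma trmxC_map_real_complex m p (A : 'M[R]_(m, p)) :
  (map_mx toC A)^t* = map_mx toC A^T.
Proof. by apply/matrixP=> i j; rewrite !mxE conjC_real_complex. Qed.

Lemma real_complex_ip (u v : 'rV[R]_n) :
  toC (ip u v) = (map_mx toC u *m (map_mx toC v)^t*) 0 0.
Proof. by rewrite trmxC_map_real_complex -map_mxM mxE. Qed.

Lemma map_mx_real_complexX (A : 'M[R]_n) k :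
  map_mx toC (A ^+ k) = (map_mx toC A) ^+ k.
Proof.
elim: k => [|k IHk]; first by rewrite !expr0 map_mx1.
by rewrite !exprS -!mulmxE map_mxM IHk.
Qed.

Lemma diag_quad_form (y d : 'rV[R[i]]_n) :
  (y *m diag_mx d *m y^t*) 0 0 = \sum_j d 0 j * `|y 0 j| ^+ 2.
Proof.
rewrite mul_mx_diag mxE; apply: eq_bigr => j _.
by rewrite !mxE normCK mulrA [_ * d 0 j]mulrC.
Qed.

(* The spectral theorem of the library needs an algebraically closed field,
   hence the detour through the complexification of M. *)
Lemma sym_quad_form_moments (M : 'M[R]_n) : M^T = M -> forall u : 'rV[R]_n,
  exists c w : 'I_n -> R, [/\ forall i, eigenvalue M (c i), forall i, 0 <= w i &
    forall k, ipM (M ^+ k) u u = \sum_i c i ^+ k * w i].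
Proof.
move=> M_sym u; pose Mc := map_mx toC M.
have Mc_herm : Mc \is hermsymmx.
  by apply/is_hermitianmxP; rewrite expr0 scale1r trmxC_map_real_complex M_sym.
have Mc_normal := hermitian_normalmx Mc_herm.
pose P := spectralmx Mc; pose D := spectral_diag Mc.
have D_real j : D 0 j = toC (complex.Re (D 0 j)).
  rewrite complexRe; apply/esym/Creal_ReP.
  exact: (mxOverP (hermitian_spectral_diag_real Mc_herm)).
pose y := map_mx toC u *m P^t*.
have y_norm_real j : `|y 0 j| ^+ 2 = toC (complex.Re (`|y 0 j| ^+ 2)).
  by rewrite complexRe; apply/esym/Creal_ReP; rewrite realX ?normr_real.
exists (fun j => complex.Re (D 0 j)), (fun j => complex.Re (`|y 0 j| ^+ 2)); split.
- move=> j; have := spectral_diag_eigenvalue Mc_normal j.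
  by rewrite -/D {1}D_real eigenvalue_map.
- by move=> j; rewrite -lecR -y_norm_real exprn_ge0.
- move=> k; apply: (@complexI R).
  rewrite /ipM ipC real_complex_ip map_mxM map_mx_real_complexX.
  rewrite (normal_spectral_exp Mc_normal) -/P -/D.
  transitivity ((y *m diag_mx (map_mx (fun d : R[i] => d ^+ k) D) *m y^t*) 0 0).
    by rewrite /y trmx_mul map_mxM trmxCK !mulmxA.
  rewrite diag_quad_form rmorph_sum; apply: eq_bigr => j _.
  rewrite mxE rmorphM rmorphXn.
  by congr (_ ^+ _ * _); [exact: D_real | exact: y_norm_real].
Qed.

End SymmetricSpectral.

Lemma pos_def_eigenvalue_gt0 (R : realType) n (M : 'M[R]_n) (a : R) :
  pos_def M -> eigenvalue M a -> 0 < a.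
Proof.
move=> M_pd /eigenvalueP[v Mv v_neq0].
by have := M_pd v v_neq0; rewrite Mv ipZr pmulr_lgt0 // ip_gt0.
Qed.

Section EigenvalueBounds.
Variables (R : realType) (n : nat) (M : 'M[R]_n).
Hypothesis M_sym : M^T = M.
Implicit Types u : 'rV[R]_n.

Lemma ipM_exp0 u : ipM (M ^+ 0) u u = ip u u.
Proof. by rewrite /ipM expr0 mulmx1. Qed.

Lemma ipM_exp2 u : ipM (M ^+ 2) u u = ip (u *m M) (u *m M).
Proof. by rewrite /ipM [RHS]ip_mulmxr M_sym ipC expr2 -mulmxE mulmxA. Qed.

Lemma ipM_le_ip : (forall a, eigenvalue M a -> a <= 1) -> forall u, ipM M u u <= ip u u.
Proof.
move=> eig_le1 u; have [c [w [c_eig w_ge0 mom]]] := sym_quad_form_moments M_sym u.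
rewrite -[ipM M u u]/(ipM (M ^+ 1) u u) mom -ipM_exp0 mom; apply: ler_sum => i _.
by rewrite expr0 ler_wpM2r ?expr1 ?eig_le1.
Qed.

Lemma ip_le_ipM (l : R) : (forall a, eigenvalue M a -> l <= a) ->
  forall u, l * ip u u <= ipM M u u.
Proof.
move=> l_le_eig u; have [c [w [c_eig w_ge0 mom]]] := sym_quad_form_moments M_sym u.
rewrite -[ipM M u u]/(ipM (M ^+ 1) u u) mom -ipM_exp0 mom mulr_sumr.
by apply: ler_sum => i _; rewrite expr0 mul1r expr1 ler_wpM2r ?l_le_eig.
Qed.

Lemma ip_mulmx_le_ipM : (forall a, eigenvalue M a -> 0 <= a <= 1) ->
  forall u, ip (u *m M) (u *m M) <= ipM M u u.
Proof.
move=> eig01 u; have [c [w [c_eig w_ge0 mom]]] := sym_quad_form_moments M_sym u.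
rewrite -ipM_exp2 -[ipM M u u]/(ipM (M ^+ 1) u u) !mom; apply: ler_sum => i _.
have /andP[c_ge0 c_le1] := eig01 _ (c_eig i).
by rewrite ler_wpM2r // expr1 expr2 ler_piMl.
Qed.

End EigenvalueBounds.

Lemma distE_le (R : realType) n (N : 'rV[R]_n -> R) x A a :
  A a -> (distE N x A <= (N (a - x))%:E)%E.
Proof. by move=> Aa; apply: ereal_inf_lbound; exists a. Qed.

Lemma distE_attained (R : realType) n (N : 'rV[R]_n -> R) x A a :
  A a -> (forall b, A b -> N (a - x) <= N (b - x)) -> distE N x A = (N (a - x))%:E.
Proof.
move=> Aa a_min; apply/eqP; rewrite eq_le distE_le //=.
by apply/ereal_infP => _ [b Ab <-]; rewrite lee_fin a_min.
Qed.

Section Distance.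
Variables (R : realType) (n : nat) (N : 'rV[R]_n -> R) (A : set 'rV[R]_n).
Hypotheses (N_ge0 : forall u, 0 <= N u) (A_neq0 : A !=set0).
Implicit Types (x : 'rV[R]_n) (y b c : R).

Definition dist x : R := fine (distE N x A).

Lemma distEE x : distE N x A = (dist x)%:E.
Proof.
have [a Aa] := A_neq0.
have distE_ge0 : (0 <= distE N x A)%E.
  by apply/ereal_infP => _ [b _ <-]; rewrite lee_fin.
by rewrite fineK // ge0_fin_numE // (le_lt_trans (distE_le _ _ Aa)) ?ltry.
Qed.

Lemma dist_le x a : A a -> dist x <= N (a - x).
Proof. by move=> Aa; rewrite -lee_fin -distEE distE_le. Qed.

Lemma dist_glb x y : (forall a, A a -> y <= N (a - x)) -> y <= dist x.
Proof.
move=> y_lb; rewrite -lee_fin -distEE.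
by apply/ereal_infP => _ [a Aa <-]; rewrite lee_fin y_lb.
Qed.

Lemma dist_ge0 x : 0 <= dist x.
Proof. exact: dist_glb. Qed.

Lemma dist_sqr_glb x c y b : 0 <= c ->
  (forall a, A a -> y <= c * N (a - x) ^+ 2 + b) -> y <= c * dist x ^+ 2 + b.
Proof.
move=> c_ge0 y_lb; have [a Aa] := A_neq0.
have [c0|c_neq0] := eqVneq c 0.
  by have := y_lb a Aa; rewrite c0 !mul0r.
have [y_le_b|b_lt_y] := lerP y b.
  by rewrite -lerBlDr (le_trans _ (mulr_ge0 c_ge0 (sqr_ge0 _))) // subr_le0.
rewrite -lerBlDr -ler_pdivrMl ?lt0r ?c_neq0 //.
have t_ge0 : 0 <= c^-1 * (y - b) by rewrite mulr_ge0 ?invr_ge0 // subr_ge0 ltW.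
rewrite -(sqr_sqrtr t_ge0); apply: lerXn2r; rewrite ?nnegrE ?sqrtr_ge0 ?dist_ge0 //.
apply: dist_glb => a' Aa'; rewrite -[N _]ger0_norm // -sqrtr_sqr ler_sqrt ?sqr_ge0 //.
by rewrite ler_pdivrMl ?lt0r ?c_neq0 // lerBlDr y_lb.
Qed.

End Distance.

Lemma finite_nneseries_EFin (R : realType) (u : nat -> R) : (forall k, 0 <= u k) ->
  (\sum_(k <oo) (u k)%:E < +oo)%E ->
  exists2 S : R, (\sum_(k <oo) (u k)%:E)%E = S%:E & forall m, \sum_(0 <= i < m) u i <= S.
Proof.
move=> u_ge0 u_fin.
have sum_ge0 : (0 <= \sum_(k <oo) (u k)%:E)%E.
  by apply: nneseries_ge0 => i _ _; rewrite lee_fin.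
have sumE : (\sum_(k <oo) (u k)%:E)%E = (fine (\sum_(k <oo) (u k)%:E))%:E.
  by rewrite fineK // ge0_fin_numE.
exists (fine (\sum_(k <oo) (u k)%:E)%E) => // m.
by rewrite -lee_fin -sumE -sumEFin; apply: nneseries_lim_ge => i _ _; rewrite lee_fin.
Qed.

Section RateArithmetic.
Variables (R : realFieldType) (s k : R).
Hypothesis s_gt0 : 0 < s.
Local Notation K := (s ^+ 2 + k ^+ 2).
Let K_gt0 : 0 < K. Proof. by rewrite ltr_wpDr ?sqr_ge0 ?exprn_gt0. Qed.

Lemma rate_sqr_underrelaxed (g a2 B X h2 : R) : 0 <= g <= 1 ->
  a2 * s ^+ 2 <= k ^+ 2 * B -> a2 + B <= X -> h2 <= g * a2 + (1 - g) * X ->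
  h2 <= (1 - g * s ^+ 2 / K) * X.
Proof.
move=> /andP[g_ge0 g_le1] a2_s2 a2_B h2_le.
have a2_K : a2 * K <= k ^+ 2 * X by have := sqr_ge0 k; nra.
have g_a2_K : g * (a2 * K) <= g * (k ^+ 2 * X) by rewrite ler_wpM2l.
rewrite -(ler_pM2r K_gt0) in h2_le; rewrite -(ler_pM2r K_gt0).
have -> : (1 - g * s ^+ 2 / K) * X * K = K * X - g * s ^+ 2 * X.
  by field; rewrite gt_eqF.
nra.
Qed.

Lemma rate_sqr_overrelaxed (g a2 B X h2 : R) : 0 <= g <= 2 ->
  a2 * s ^+ 2 <= k ^+ 2 * B -> h2 <= X - (2 * g - g ^+ 2) * B ->
  h2 <= a2 + (1 - g) ^+ 2 * B -> h2 <= (1 - (2 * g - g ^+ 2) * s ^+ 2 / K) * X.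
Proof.
move=> /andP[g_ge0 g_le2] a2_s2 h2_X h2_a2.
have m_ge0 : 0 <= 2 * g - g ^+ 2 by nra.
have h2_s2 : h2 * s ^+ 2 <= (k ^+ 2 + (1 - g) ^+ 2 * s ^+ 2) * B.
  by have := sqr_ge0 (1 - g); have := sqr_ge0 s; nra.
have L_ge0 : 0 <= k ^+ 2 + (1 - g) ^+ 2 * s ^+ 2.
  by apply: addr_ge0; [exact: sqr_ge0 | exact: mulr_ge0 (sqr_ge0 _) (sqr_ge0 _)].
have K_mL : K = (2 * g - g ^+ 2) * s ^+ 2 + (k ^+ 2 + (1 - g) ^+ 2 * s ^+ 2) by ring.
move: m_ge0 h2_s2 L_ge0 K_mL h2_X.
set m := 2 * g - g ^+ 2; set L := k ^+ 2 + (1 - g) ^+ 2 * s ^+ 2.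
move=> m_ge0 h2_s2 L_ge0 K_mL h2_X.
have m_h2 : m * (h2 * s ^+ 2) <= m * (L * B) by rewrite ler_wpM2l.
have L_B : L * (m * B) <= L * (X - h2) by rewrite ler_wpM2l // lerBrDl -lerBrDr.
rewrite -(ler_pM2r K_gt0).
have -> : (1 - m * s ^+ 2 / K) * X * K = K * X - m * s ^+ 2 * X.
  by field; rewrite gt_eqF.
rewrite K_mL; nra.
Qed.

End RateArithmetic.

Section Rate.
Variables (R : realType) (g k s : R).
Hypotheses (s_gt0 : 0 < s) (k_gt0 : 0 < k) (g_gt0 : 0 < g) (g_lt2 : g < 2).
Local Notation K := (s ^+ 2 + k ^+ 2).
Local Notation radicand := (1 - Num.min g (2 * g - g ^+ 2) * s ^+ 2 / K).

Lemma rate_radicand_ge : (1 - g) ^+ 2 <= radicand.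
Proof.
have m_gt0 : 0 < 2 * g - g ^+ 2.
  have -> : 2 * g - g ^+ 2 = g * (2 - g) by ring.
  by rewrite mulr_gt0 // subr_gt0.
have m_ge0 : 0 <= Num.min g (2 * g - g ^+ 2) by rewrite le_min !ltW.
have m_le : Num.min g (2 * g - g ^+ 2) <= 2 * g - g ^+ 2 by rewrite ge_min lexx orbT.
have ratio_le1 : s ^+ 2 / K <= 1.
  by rewrite ler_pdivrMr ?ltr_wpDr ?sqr_ge0 ?exprn_gt0 // mul1r lerDl sqr_ge0.
have : Num.min g (2 * g - g ^+ 2) * (s ^+ 2 / K) <= Num.min g (2 * g - g ^+ 2).
  exact: ler_piMr.
by rewrite mulrA; nra.
Qed.

(* (1 - de) rate = sqrt radicand + de (mu + 1) with mu >= 0, so the claim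
   reduces to g - 1 <= sqrt radicand. *)
Lemma rate_ge (de : R) : 0 <= de < 1 ->
  Num.sqrt radicand + g * (de / (1 - de)) <= rate g k s de.
Proof.
move=> /andP[de_ge0 de_lt1].
have g1_le : g - 1 <= Num.sqrt radicand.
  rewrite (le_trans (ler_norm _)) // -sqrtr_sqr ler_wsqrtr //.
  by rewrite -sqrrN opprB rate_radicand_ge.
have mu_ge0 : 0 <= Num.min g 1 * k / Num.sqrt K.
  have min_ge0 : 0 <= Num.min g 1 by rewrite le_min (ltW g_gt0) ler01.
  by apply: divr_ge0; [exact: mulr_ge0 min_ge0 (ltW k_gt0) | exact: sqrtr_ge0].
have de1_gt0 : 0 < 1 - de by rewrite subr_gt0.
rewrite /rate -(ler_pM2l de1_gt0) mulVKf ?gt_eqF //.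
have -> : (1 - de) * (Num.sqrt radicand + g * (de / (1 - de))) =
          (1 - de) * Num.sqrt radicand + g * de.
  by field; rewrite gt_eqF.
by have := sqrtr_ge0 radicand; nra.
Qed.

End Rate.

Lemma zeros_convex (R : realType) n (T : 'rV[R]_n -> set 'rV[R]_n) a b (t : R) :
  maximal_monotone T -> zeros T a -> zeros T b -> 0 <= t <= 1 ->
  zeros T (t *: a + (1 - t) *: b).
Proof.
move=> [T_mono T_max] Ta Tb /andP[t_ge0 t_le1]; apply: T_max => y v Tyv.
have -> : t *: a + (1 - t) *: b - y = t *: (a - y) + (1 - t) *: (b - y).
  by apply/rowP => j; rewrite !mxE; ring.
rewrite ipDl !ipZl addr_ge0 // mulr_ge0 ?subr_ge0 //.
- exact: T_mono Ta Tyv.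
- exact: T_mono Tb Tyv.
Qed.

Definition subregular_on (R : realType) n (T : 'rV[R]_n -> set 'rV[R]_n) (r k : R) :=
  forall y, normv y <= r ->
    (distE (@normv R n) y (zeros T) <= k%:E * distE (@normv R n) 0 (T y))%E.

Section Resolvent.
Variables (R : realType) (n : nat) (T : 'rV[R]_n -> set 'rV[R]_n) (M : 'M[R]_n).
Hypotheses (M_sym : M^T = M) (M_pd : pos_def M) (T_mm : maximal_monotone T).
Variables (s : R) (x p : 'rV[R]_n).
Hypotheses (s_gt0 : 0 < s) (x_p : resolvent_pt M T s x p).
Local Notation ipM := (ipM M).
Local Notation normM := (normM M).
Local Notation B := (ipM (x - p) (x - p)).
Local Notation zh g := (g *: p + (1 - g) *: x).
Let normM_nneg : forall u, 0 <= normM u := @normM_ge0 R n M.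

Lemma resolvent_ptE : exists2 v, T p v & (x - p) *m M = s *: v.
Proof.
case: x_p => v [Tpv ->]; exists v => //.
by rewrite [p + _ - p]addrC addKr -scalemxAl mulmxKV ?pos_def_unitmx.
Qed.

Lemma resolvent_ipM_ge0 o : zeros T o -> 0 <= ipM (p - o) (x - p).
Proof.
move=> To; have [v Tpv xpM] := resolvent_ptE.
rewrite /ipM xpM ipZr mulr_ge0 ?(ltW s_gt0) // -[v]subr0.
by case: T_mm => T_mono _; exact: T_mono Tpv To.
Qed.

Lemma ipM_relaxation_sqr g o : ipM (zh g - o) (zh g - o) =
  ipM (p - o) (p - o) + 2 * (1 - g) * ipM (p - o) (x - p) + (1 - g) ^+ 2 * B.
Proof.
rewrite -ipM_sqrDZ //; congr (ipM _ _); apply/rowP => j; rewrite !mxE; ring.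
Qed.

Lemma ipM_resolvent_split o :
  ipM (x - o) (x - o) = ipM (p - o) (p - o) + 2 * ipM (p - o) (x - p) + B.
Proof.
by have := ipM_relaxation_sqr 0 o; rewrite scale0r add0r subr0 scale1r expr1n mul1r mulr1.
Qed.

Lemma resolvent_firm o : zeros T o -> ipM (p - o) (p - o) + B <= ipM (x - o) (x - o).
Proof. by move=> To; rewrite (ipM_resolvent_split o); have := resolvent_ipM_ge0 To; lra. Qed.

Lemma relaxed_resolvent_contract g o : 0 <= g -> zeros T o ->
  ipM (zh g - o) (zh g - o) <= ipM (x - o) (x - o) - (2 * g - g ^+ 2) * B.
Proof.
move=> g_ge0 To; rewrite (ipM_resolvent_split o) ipM_relaxation_sqr.
by have := resolvent_ipM_ge0 To; have := ipM_ge0 M_pd (x - p); nra.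
Qed.

Lemma overrelaxed_resolvent_le g o : 1 <= g -> zeros T o ->
  ipM (zh g - o) (zh g - o) <= ipM (p - o) (p - o) + (1 - g) ^+ 2 * B.
Proof. by move=> g_ge1 To; rewrite ipM_relaxation_sqr; have := resolvent_ipM_ge0 To; nra. Qed.

Lemma normM_resolvent_le o : zeros T o -> normM (p - o) <= normM (x - o).
Proof.
move=> To; apply: normM_le_sqr => //; rewrite normM_sqr //.
by have := resolvent_firm To; have := ipM_ge0 M_pd (x - p); lra.
Qed.

Lemma normM_relaxed_resolvent_le g o : 0 <= g <= 2 -> zeros T o ->
  normM (zh g - o) <= normM (x - o).
Proof.
move=> /andP[g_ge0 g_le2] To; apply: normM_le_sqr => //; rewrite normM_sqr //.
have := relaxed_resolvent_contract g_ge0 To.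
have : 0 <= (2 * g - g ^+ 2) * B.
  have -> : 2 * g - g ^+ 2 = g * (2 - g) by ring.
  by rewrite !mulr_ge0 ?ipM_ge0 ?subr_ge0.
lra.
Qed.

Hypothesis zeros_neq0 : zeros T !=set0.
Local Notation d := (dist normM (zeros T)).

Lemma normM_sqrB u o : normM (o - u) ^+ 2 = ipM (u - o) (u - o).
Proof. by rewrite normMB normM_sqr. Qed.

Lemma dist_sqr_le u o : zeros T o -> d u ^+ 2 <= ipM (u - o) (u - o).
Proof.
move=> To; rewrite -normM_sqrB; apply: lerXn2r; rewrite ?nnegrE ?dist_ge0 //.
exact: dist_le.
Qed.

Lemma dist_resolvent_sqr : d p ^+ 2 + B <= d x ^+ 2.
Proof.
rewrite -[d x ^+ 2]mul1r -[_ * _]addr0; apply: dist_sqr_glb => // o To.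
rewrite mul1r addr0 normM_sqrB.
by have := dist_sqr_le p To; have := resolvent_firm To; lra.
Qed.

Lemma dist_underrelaxed_sqr g : 0 <= g <= 1 ->
  d (zh g) ^+ 2 <= g * d p ^+ 2 + (1 - g) * d x ^+ 2.
Proof.
move=> /andP[g_ge0 g_le1]; rewrite [X in _ <= X]addrC.
apply: dist_sqr_glb; rewrite ?subr_ge0 // => o' To'; rewrite [X in _ <= X]addrC.
apply: dist_sqr_glb => // o To; rewrite !normM_sqrB.
have Tc := zeros_convex T_mm To To' (introT andP (conj g_ge0 g_le1)).
apply: le_trans (dist_sqr_le _ Tc) _.
have -> : zh g - (g *: o + (1 - g) *: o') = g *: (p - o) + (1 - g) *: (x - o').
  by apply/rowP => j; rewrite !mxE; ring.
by apply: ipM_convex; rewrite ?g_ge0.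
Qed.

Lemma dist_relaxed_resolvent_sqr g k : 0 < g < 2 -> d p ^+ 2 * s ^+ 2 <= k ^+ 2 * B ->
  d (zh g) ^+ 2 <= (1 - Num.min g (2 * g - g ^+ 2) * s ^+ 2 / (s ^+ 2 + k ^+ 2)) * d x ^+ 2.
Proof.
move=> /andP[g_gt0 g_lt2] dp_B.
have [g_le1|g_gt1] := lerP g 1.
  have -> : Num.min g (2 * g - g ^+ 2) = g by apply/min_idPl; nra.
  have g01 : 0 <= g <= 1 by rewrite (ltW g_gt0) g_le1.
  apply: (rate_sqr_underrelaxed s_gt0 g01 dp_B).
    exact: dist_resolvent_sqr.
  exact: dist_underrelaxed_sqr.
have -> : Num.min g (2 * g - g ^+ 2) = 2 * g - g ^+ 2 by apply/min_idPr; nra.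
have g02 : 0 <= g <= 2 by rewrite (ltW g_gt0) (ltW g_lt2).
apply: (rate_sqr_overrelaxed s_gt0 g02 dp_B).
- rewrite -[d x ^+ 2]mul1r; apply: dist_sqr_glb => // o To.
  rewrite mul1r normM_sqrB; apply: le_trans (dist_sqr_le _ To) _.
  exact: (relaxed_resolvent_contract (ltW g_gt0) To).
- rewrite -[d p ^+ 2]mul1r; apply: dist_sqr_glb => // o To.
  rewrite mul1r normM_sqrB; apply: le_trans (dist_sqr_le _ To) _.
  exact: (overrelaxed_resolvent_le (ltW g_gt1) To).
Qed.

Hypothesis eigenvalue_le1 : forall a, eigenvalue M a -> a <= 1.

Lemma dist_resolvent_subreg (k r : R) : 0 < k -> normv p <= r ->
  subregular_on T r k ->
  d p * s <= k * normM (x - p).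
Proof.
move=> k_gt0 p_r subreg; have [v Tpv xpM] := resolvent_ptE.
have normv_nneg (u : 'rV[R]_n) : 0 <= normv u := sqrtr_ge0 _.
have dp_le : d p <= dist (@normv R n) (zeros T) p.
  apply: dist_glb => // o To; apply: le_trans (dist_le _ _ _ To) _ => //.
  by rewrite normvE ler_wsqrtr // mulmx1; exact: (ipM_le_ip M_sym eigenvalue_le1).
have dvp_le : dist (@normv R n) (zeros T) p <= k * normv v.
  rewrite -lee_fin EFinM -distEE //; apply: (le_trans (subreg p p_r)).
  rewrite lee_wpmul2l ?lee_fin ?(ltW k_gt0) //.
  by have := distE_le (@normv R n) 0 Tpv; rewrite subr0.
have sv_le : s * normv v <= normM (x - p).
  rewrite -[s]gtr0_norm // normvE -normMZ -xpM ler_wsqrtr // mulmx1.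
  apply: (ip_mulmx_le_ipM M_sym) => a Ma.
  by rewrite eigenvalue_le1 // ltW // (pos_def_eigenvalue_gt0 M_pd).
apply: (le_trans (ler_wpM2r (ltW s_gt0) (le_trans dp_le dvp_le))).
by rewrite -mulrA [normv v * s]mulrC ler_wpM2l ?(ltW k_gt0).
Qed.

Variables (eta de g : R) (w z : 'rV[R]_n).
Hypotheses (w_p : normM (w - p) <= Num.min eta (de * normM (w - x)))
  (z_w : z = g *: w + (1 - g) *: x) (g_gt0 : 0 < g) (g_lt2 : g < 2).

Lemma inexact_fejer o : zeros T o -> normM (z - o) <= normM (x - o) + g * eta.
Proof.
move=> To; have -> : z - o = (zh g - o) + g *: (w - p).
  by rewrite z_w; apply/rowP => j; rewrite !mxE; ring.
apply: le_trans (normMD M_sym M_pd _ _) _; rewrite normMZ gtr0_norm // lerD //.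
  by apply: normM_relaxed_resolvent_le; rewrite ?ltW.
by rewrite ler_wpM2l ?(ltW g_gt0) //; apply: le_trans w_p _; rewrite ge_min lexx.
Qed.

Lemma inexact_error : 0 <= de < 1 -> normM (w - p) <= de / (1 - de) * d x.
Proof.
move=> /andP[de_ge0 de_lt1].
have xp_le : normM (x - p) <= d x.
  apply: normM_le_sqr; rewrite ?dist_ge0 //.
  by have := dist_resolvent_sqr; have := sqr_ge0 (d p); lra.
have w_x : normM (w - x) <= normM (w - p) + normM (x - p).
  have -> : w - x = (w - p) + (p - x) by rewrite addrA subrK.
  by rewrite [normM (x - p)]normMB; apply: normMD.
have w_le : normM (w - p) <= de * normM (w - x).
  by apply: le_trans w_p _; rewrite ge_min lexx orbT.
rewrite mulrAC ler_pdivlMr ?subr_gt0 //.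
by have := normM_nneg (w - p); nra.
Qed.

Lemma inexact_step_rate (k r : R) : 0 < k -> 0 <= de < 1 -> normv p <= r ->
  subregular_on T r k ->
  d z <= rate g k s de * d x.
Proof.
move=> k_gt0 de01 p_r subreg.
set radicand := 1 - Num.min g (2 * g - g ^+ 2) * s ^+ 2 / (s ^+ 2 + k ^+ 2).
have radicand_ge0 : 0 <= radicand.
  by apply: le_trans (sqr_ge0 (1 - g)) _; apply: rate_radicand_ge.
have dp_B : d p ^+ 2 * s ^+ 2 <= k ^+ 2 * B.
  rewrite -exprMn -normM_sqr // -exprMn; apply: lerXn2r.
  - by rewrite nnegrE mulr_ge0 ?dist_ge0 ?(ltW s_gt0).
  - by rewrite nnegrE mulr_ge0 ?(ltW k_gt0).
  - exact: (dist_resolvent_subreg k_gt0 p_r subreg).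
have dh_le : d (zh g) <= Num.sqrt radicand * d x.
  rewrite -[d (zh g)]ger0_norm ?dist_ge0 // -sqrtr_sqr -[d x]ger0_norm ?dist_ge0 //.
  rewrite -sqrtr_sqr -sqrtrM // ler_wsqrtr //.
  by apply: dist_relaxed_resolvent_sqr; rewrite ?g_gt0.
have dz_le : d z <= d (zh g) + g * normM (w - p).
  rewrite -lerBlDr; apply: dist_glb => // o To; rewrite lerBlDr.
  apply: le_trans (dist_le _ _ z To) _ => //.
  have -> : o - z = (o - zh g) + (- g) *: (w - p).
    by rewrite z_w; apply/rowP => j; rewrite !mxE; ring.
  by apply: le_trans (normMD M_sym M_pd _ _) _; rewrite normMZ normrN gtr0_norm.
have := rate_ge s_gt0 k_gt0 g_gt0 g_lt2 de01; rewrite -/radicand => rate_le.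
apply: le_trans dz_le _.
apply: le_trans (lerD dh_le (ler_wpM2l (ltW g_gt0) (inexact_error de01))) _.
by rewrite mulrA -mulrDl ler_wpM2r ?dist_ge0.
Qed.

End Resolvent.

Section IGPPA.
Variables (R : realType) (n : nat) (T : 'rV[R]_n -> set 'rV[R]_n) (M : 'M[R]_n).
Hypotheses (M_sym : M^T = M) (M_pd : pos_def M) (T_mm : maximal_monotone T).
Variables (z : nat -> 'rV[R]_n) (sigma eta delta : nat -> R) (g : R).
Hypotheses (sigma_gt0 : forall k, 0 < sigma k) (g_gt0 : 0 < g) (g_lt2 : g < 2).
Hypothesis z_step :
  forall k, IGPPAstep_out M T (z k) (sigma k) (eta k) (delta k) g (z k.+1).

Lemma IGPPA_fejer o m : zeros T o ->
  normM M (z m - o) <= normM M (z 0 - o) + g * \sum_(0 <= i < m) eta i.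
Proof.
move=> To; elim: m => [|m IHm]; first by rewrite big_geq // mulr0 addr0.
have [w [p [x_p [w_p z_w]]]] := z_step m.
apply: le_trans (inexact_fejer M_sym M_pd T_mm (sigma_gt0 m) x_p w_p z_w g_gt0 g_lt2 To) _.
by rewrite big_nat_recr //= mulrDr addrA lerD2r.
Qed.

End IGPPA.
Theorem theorem2 (R : realType) (n : nat) (T : 'rV[R]_n -> set 'rV[R]_n)
  (M : 'M[R]_n) (lmin : R)
  (z : nat -> 'rV[R]_n) (sigma eta delta : nat -> R) (gamma : R)
  (zbar0 : 'rV[R]_n) (r kappa : R) :
  maximal_monotone T ->
  zeros T !=set0 ->
  self_adjoint M -> pos_def M ->
  (* lambda_max(M) = 1 *)
  eigenvalue M 1 -> (forall a, eigenvalue M a -> a <= 1) ->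
  (* lmin = lambda_min(M) *)
  eigenvalue M lmin -> (forall a, eigenvalue M a -> lmin <= a) ->
  (forall k, 0 <= sigma k) -> (forall k, 0 <= eta k) -> (forall k, 0 <= delta k) ->
  (\sum_(k <oo) (eta k)%:E < +oo)%E ->
  (0 < ereal_inf (range (fun k => (sigma k)%:E)))%E ->
  (ereal_sup (range (fun k => (delta k)%:E)) < 1%:E)%E ->
  0 < gamma < 2 ->
  (forall k, IGPPAstep_out M T (z k) (sigma k) (eta k) (delta k) gamma (z k.+1)) ->
  (* zbar0 is a point of Omega nearest to z 0 in ||.||_M *)
  zeros T zbar0 ->
  (forall d, zeros T d -> normM M (zbar0 - z 0) <= normM M (d - z 0)) ->
  0 < r ->
  ((normv zbar0)%:E + (lmin^-1)%:E *
     (distE (normM M) (z 0%N) (zeros T) + gamma%:E * \sum_(k <oo) (eta k)%:E)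
   <= r%:E)%E ->
  0 < kappa ->
  (forall x, normv x <= r ->
     (distE (@normv R n) x (zeros T) <= kappa%:E * distE (@normv R n) 0 (T x))%E) ->
  forall k,
    (distE (normM M) (z k.+1) (zeros T)
     <= (rate gamma kappa (sigma k) (delta k))%:E * distE (normM M) (z k) (zeros T))%E.
Proof.
move=> T_mm zeros_neq0 M_sym M_pd _ eig_le1 eig_lmin lmin_le _ eta_ge0 delta_ge0 eta_sum
  sigma_inf delta_sup /andP[g_gt0 g_lt2] z_step zbar0_0 zbar0_min _ r_ge k_gt0 subreg k.
have sigma_gt0 m : 0 < sigma m.
  by rewrite -lte_fin (lt_le_trans sigma_inf) //; apply: ereal_inf_lbound; exists m.
have delta_lt1 m : delta m < 1.
  by rewrite -lte_fin (le_lt_trans _ delta_sup) //; apply: ereal_sup_ubound; exists m.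
have lmin_gt0 := pos_def_eigenvalue_gt0 M_pd eig_lmin.
have [S eta_sumE eta_partial] := finite_nneseries_EFin eta_ge0 eta_sum.
rewrite (distE_attained zbar0_0 zbar0_min) eta_sumE in r_ge.
have {}r_ge : normv zbar0 + lmin^-1 * (normM M (zbar0 - z 0) + gamma * S) <= r.
  by rewrite -lee_fin EFinD EFinM EFinD EFinM.
have [w [p [x_p [w_p z_w]]]] := z_step k.
rewrite !(distEE (@normM_ge0 _ _ M) zeros_neq0) -EFinM lee_fin.
apply: (inexact_step_rate M_sym M_pd T_mm (sigma_gt0 k) x_p zeros_neq0 eig_le1 w_p z_w
  g_gt0 g_lt2 k_gt0 _ _ subreg); first by rewrite delta_ge0 delta_lt1.
apply: le_trans r_ge; rewrite -[p](subrK zbar0) addrC (le_trans (normvD _ _)) // lerD2l.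
rewrite -(ler_pM2l lmin_gt0) mulrA mulfV ?gt_eqF // mul1r.
apply: le_trans (normv_le_normM _ _) _; first by rewrite (ltW lmin_gt0) (eig_le1 _ eig_lmin).
  exact: (ip_le_ipM M_sym lmin_le).
apply: le_trans (normM_resolvent_le M_sym M_pd T_mm (sigma_gt0 k) x_p zbar0_0) _.
apply: le_trans (IGPPA_fejer M_sym M_pd T_mm sigma_gt0 g_gt0 g_lt2 z_step k zbar0_0) _.
by rewrite normMB lerD2l ler_wpM2l ?(ltW g_gt0).
Qed.
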